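(* Let $R$ be a $*$-ring and $a\in R$. The following are equivalent: (1) There exist a projection $e$, a unit $u$ and an integer $m\geq1$ such that $a^m=eu$ and $a,e,u$ pairwise commute. (2) There exist a projection $f$ and a unit $v$ such that $a=f+v$, $fv=vf$ and $af$ is nilpotent. (3) There exists a projection $p$ with $ap=pa$ such that $ap$ is a unit of the corner ring $pRp$ and $a(1-p)$ is nilpotent. (4) There exists $b\in R$ with $ab=ba$ such that $(ab)^*=ab$, $b=bab$ and $a-a^2b$ is nilpotent.
   Context: A $*$-ring is a ring with identity with an involution $*$ ($(x+y)^*=x^*+y^*$, $(xy)^*=y^*x^*$, $(x^* )^*=x$). A projection is $p$ with $p^2=p=p^*$. *)

From HB Require Import structures.
From mathcomp Require Import all_boot all_algebra.
Set Implicit Arguments. Unset Strict Implicit. Unset Printing Implicit Defensive.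
Import GRing.Theory.
Local Open Scope ring_scope.

(* A *-ring: a ring with identity (possibly 0 = 1, hence pzRingType)
   together with an involution star. *)
Definition is_involution (R : pzRingType) (star : R -> R) : Prop :=
  [/\ forall x y : R, star (x + y) = star x + star y,
      forall x y : R, star (x * y) = star y * star x &
      forall x : R, star (star x) = x].

Definition is_projection (R : pzRingType) (star : R -> R) (p : R) : Prop :=
  p * p = p /\ star p = p.

Definition is_unit (R : pzRingType) (u : R) : Prop :=
  exists w : R, u * w = 1 /\ w * u = 1.

Definition is_nilpotent (R : pzRingType) (x : R) : Prop :=
  exists n : nat, x ^+ n = 0.

(* x is a unit of the corner ring pRp (whose identity is p):
   x lies in pRp and has an inverse in pRp. *)
Definition corner_unit (R : pzRingType) (p x : R) : Prop :=
  x = p * x * p /\ exists y : R, y = p * y * p /\ x * y = p /\ y * x = p.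

From mathcomp Require Import all_boot all_algebra.
Set Implicit Arguments. Unset Strict Implicit. Unset Printing Implicit Defensive.
Import GRing.Theory.
Local Open Scope ring_scope.

(** Each implication has an explicit witness.
  (1 => 4): [b := a^(m-1) u^-1 e] satisfies [ab = e], and [a - a^2 b = a(1-e)]
  has [m]-th power [eu(1-e) = 0].
  (4 => 3): [p := ab].
  (3 => 2): [f := 1 - p]; the unit [v := a - f] is [ap] on the corner [pRp]
  plus [a(1-p) - 1] on the complementary corner, where [a(1-p)] is nilpotent,
  so both pieces are invertible.
  (2 => 1): if [(af)^k = 0] then [a^(k+1) = (1-f) v^(k+1)]. *)

Section Units.
Variable R : pzRingType.
Implicit Types u w z n : R.

Lemma unit_inv_comm u w z :
  u * w = 1 -> w * u = 1 -> GRing.comm z u -> GRing.comm z w.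
Proof.
move=> uw wu zu.
by rewrite /GRing.comm -[w * z]mulr1 -uw mulrA -(mulrA w z u) zu mulrA wu mul1r.
Qed.

Lemma is_unitN u : is_unit u -> is_unit (- u).
Proof. by case=> w [uw wu]; exists (- w); rewrite !mulrNN. Qed.

Lemma is_unitX u k : is_unit u -> is_unit (u ^+ k).
Proof.
case=> w [uw wu]; have uw_comm : GRing.comm u w by rewrite /GRing.comm uw wu.
exists (w ^+ k); rewrite -!exprMn_comm ?uw ?wu ?expr1n //.
Qed.

Lemma is_unit_1Bnilpotent n : is_nilpotent n -> is_unit (1 - n).
Proof.
case=> k nk; exists (\sum_(i < k) n ^+ i).
have inv : (1 - n) * (\sum_(i < k) n ^+ i) = 1.
  by rewrite -opprB mulNr -subrX1 nk sub0r opprK.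
split=> //; rewrite -[RHS]inv; apply/commr_sym/commr_sum => i _.
exact/commrX/commr_sym/commrB/commr_refl/commr1.
Qed.

End Units.

Section Idempotent.
Variables (R : pzRingType) (p : R).
Hypothesis pp : p * p = p.

Lemma idemX m : (0 < m)%N -> p ^+ m = p.
Proof. by case: m => // m _; elim: m => [|m IH]; rewrite ?expr1 // exprS IH. Qed.

Lemma idem1B : (1 - p) * (1 - p) = 1 - p.
Proof. by rewrite mulrBr !mulrBl !mulr1 !mul1r pp subrr subr0. Qed.

Lemma mulr_idem1B : p * (1 - p) = 0.
Proof. by rewrite mulrBr mulr1 pp subrr. Qed.

Lemma mul1B_idem : (1 - p) * p = 0.
Proof. by rewrite mulrBl mul1r pp subrr. Qed.

(* A unit of the corner [pRp] glued with a unit [c] that commutes with [p]: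
   the inverse is glued in the same way, and cross terms vanish by [p(1-p) = 0]. *)
Lemma corner_unit_add x c :
  corner_unit p x -> is_unit c -> GRing.comm p c -> is_unit (x + (1 - p) * c).
Proof.
move=> [xE [y [yE [xy yx]]]] [w [cw wc]] pc.
have pw := unit_inv_comm cw wc pc.
have qc : GRing.comm (1 - p) c by exact/commr_sym/commrB/commr_sym/pc/commr1.
have qw : GRing.comm (1 - p) w by exact/commr_sym/commrB/commr_sym/pw/commr1.
have corner_q z : z = p * z * p -> z * (1 - p) = 0 /\ (1 - p) * z = 0.
  by move=> ->; rewrite -mulrA mulr_idem1B mulr0 !mulrA mul1B_idem !mul0r.
have [xq qx] := corner_q x xE; have [yq qy] := corner_q y yE.
have qq : forall s t, s * t = 1 -> GRing.comm (1 - p) s ->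
    (1 - p) * s * ((1 - p) * t) = 1 - p.
  by move=> s t st qs; rewrite -mulrA (mulrA s) -qs -(mulrA _ s t) st mulr1 idem1B.
have cross z t : z * (1 - p) = 0 -> z * ((1 - p) * t) = 0.
  by move=> zq; rewrite mulrA zq mul0r.
have cross' s z : GRing.comm (1 - p) s -> (1 - p) * z = 0 -> (1 - p) * s * z = 0.
  by move=> qs qz; rewrite qs -mulrA qz mulr0.
exists (y + (1 - p) * w); split; rewrite mulrDl !mulrDr.
- by rewrite xy (cross _ _ xq) (cross' _ _ qc qy) (qq _ _ cw qc) addr0 add0r addrC subrK.
- by rewrite yx (cross _ _ yq) (cross' _ _ qw qx) (qq _ _ wc qw) addr0 add0r addrC subrK.
Qed.

End Idempotent.

Section Involution.
Variables (R : pzRingType) (star : R -> R).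
Hypothesis inv : is_involution star.

Lemma is_projection1B p : is_projection star p -> is_projection star (1 - p).
Proof.
case: inv => starD starM starK [pp sp]; split; first exact: idem1B.
have star0 : star 0 = 0 by apply: (@addrI _ (star 0)); rewrite -starD !addr0.
have star1 : star 1 = 1 by rewrite -[star 1]mulr1 -{2}(starK 1) -starM mulr1 starK.
have starN x : star (- x) = - star x.
  by apply/eqP; rewrite -subr_eq0 opprK -starD addNr star0.
by rewrite starD starN star1 sp.
Qed.

Variable a : R.

Definition projection_unit_power : Prop :=
  exists (e u : R) (m : nat),
    [/\ is_projection star e, is_unit u, (0 < m)%N, a ^+ m = e * u &
     [/\ a * e = e * a, a * u = u * a & e * u = u * e]].

Definition projection_unit_sum : Prop :=
  exists f v : R,
    [/\ is_projection star f, is_unit v, a = f + v, f * v = v * f &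
     is_nilpotent (a * f)].

Definition projection_corner_split : Prop :=
  exists p : R,
    [/\ is_projection star p, a * p = p * a, corner_unit p (a * p) &
     is_nilpotent (a * (1 - p))].

Definition star_drazin_inverse (b : R) : Prop :=
  [/\ a * b = b * a, star (a * b) = a * b, b = b * a * b &
   is_nilpotent (a - a ^+ 2 * b)].

Lemma star_drazin_of_power :
  projection_unit_power -> exists b, star_drazin_inverse b.
Proof.
move=> [e [u [m [[ee se] [w [uw wu]] m_gt0 am [ae au eu]]]]].
have aw : GRing.comm a w := unit_inv_comm uw wu au.
set b := a ^+ m.-1 * w * e.
have ab : a * b = e.
  by rewrite /b !mulrA -exprS prednK // am -(mulrA e u w) uw mulr1 ee.
have ba : GRing.comm a b by apply/commrM/ae/commrM/aw/commrX/commr_refl.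
exists b; split=> //; first by rewrite ab se.
- by rewrite -mulrA ab /b -[RHS]mulrA ee.
have ae_comm : GRing.comm a (1 - e) by apply/commrB/ae/commr1.
exists m; rewrite expr2 -mulrA ab -[a in a - _]mulr1 -mulrBr.
by rewrite exprMn_comm // (idemX (idem1B ee) m_gt0) am eu -mulrA mulr_idem1B // mulr0.
Qed.

Lemma corner_split_of_star_drazin :
  (exists b, star_drazin_inverse b) -> projection_corner_split.
Proof.
move=> [b [ab sab bab [k nk]]].
have pp : a * b * (a * b) = a * b by rewrite -mulrA (mulrA b) -bab.
have bp : b * (a * b) = b by rewrite mulrA -bab.
have pb : a * b * b = b by rewrite ab -bab.
have ap : a * (a * b) = a * b * a by rewrite -mulrA ab.
have xp : a * (a * b) * (a * b) = a * (a * b) by rewrite -mulrA pp.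
exists (a * b); split=> //.
- split; first by rewrite -[RHS]mulrA xp [RHS]mulrA -ap xp.
  exists b; split; [by rewrite pb bp | split].
  + by rewrite -mulrA pb.
  + by rewrite mulrA -ab pp.
- by exists k; rewrite mulrBr mulr1 mulrA -expr2.
Qed.

Lemma unit_sum_of_corner_split :
  projection_corner_split -> projection_unit_sum.
Proof.
move=> [p [[pp sp] ap a_corner a_nil]].
have qa : GRing.comm (1 - p) a by apply/commr_sym/commrB/ap/commr1.
have c_unit : is_unit (- (1 - a * (1 - p))) by apply/is_unitN/is_unit_1Bnilpotent.
have pq : GRing.comm p (1 - p) := commrB (commr1 p) (commr_refl p).
have pc : GRing.comm p (- (1 - a * (1 - p))).
  exact: commrN (commrB (commr1 p) (commrM (commr_sym ap) pq)).
have vE : a - (1 - p) = a * p + (1 - p) * - (1 - a * (1 - p)).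
  rewrite mulrN mulrBr mulr1 mulrA qa -mulrA idem1B //.
  by rewrite [in RHS]opprB [in RHS]addrA -mulrDr [p + _]addrC subrK mulr1.
exists (1 - p), (a - (1 - p)); split.
- exact: is_projection1B.
- by rewrite vE; apply: corner_unit_add.
- by rewrite addrC subrK.
- by apply/commrB/commr_refl/commr_sym.
- exact: a_nil.
Qed.

Lemma power_of_unit_sum : projection_unit_sum -> projection_unit_power.
Proof.
move=> [f [v [[ff sf] v_unit aE fv [k nk]]]].
have af : GRing.comm a f by rewrite /GRing.comm aE mulrDl mulrDr ff fv.
have av : GRing.comm a v by rewrite /GRing.comm aE mulrDl mulrDr fv.
have aq : GRing.comm a (1 - f) by apply/commrB/af/commr1.
have vq : GRing.comm v (1 - f) by apply/commrB/esym/fv/commr1.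
have avf : a * (1 - f) = v * (1 - f).
  by rewrite aE mulrDl mulrBr mulr1 ff subrr add0r.
have akf : a ^+ k.+1 * f = 0.
  by rewrite -[f in _ * f](idemX ff (ltn0Sn k)) -exprMn_comm // exprSr nk mul0r.
exists (1 - f), (v ^+ k.+1), k.+1; split=> //.
- exact: is_projection1B.
- exact: is_unitX.
- have q_idemX := idemX (idem1B ff) (ltn0Sn k).
  have ak_q : a ^+ k.+1 = a ^+ k.+1 * (1 - f) by rewrite mulrBr mulr1 akf subr0.
  rewrite ak_q -[X in _ * X]q_idemX -exprMn_comm // avf.
  by rewrite exprMn_comm // q_idemX; apply/esym/commrX/commr_sym.
- split; [exact: aq | exact: commrX | exact/commrX/commr_sym].
Qed.

End Involution.

Theorem theorem3p2 (R : pzRingType) (star : R -> R) (a : R) :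
  is_involution star ->
  [<->
   (exists (e u : R) (m : nat),
       [/\ is_projection star e, is_unit u, (0 < m)%N, a ^+ m = e * u &
        [/\ a * e = e * a, a * u = u * a & e * u = u * e]]);
   (exists f v : R,
       [/\ is_projection star f, is_unit v, a = f + v, f * v = v * f &
        is_nilpotent (a * f)]);
   (exists p : R,
       [/\ is_projection star p, a * p = p * a, corner_unit p (a * p) &
        is_nilpotent (a * (1 - p))]);
   (exists b : R,
       [/\ a * b = b * a, star (a * b) = a * b, b = b * a * b &
        is_nilpotent (a - a ^+ 2 * b)])].
Proof.
move=> inv.
have c14 := @star_drazin_of_power _ star a.
have c43 := @corner_split_of_star_drazin _ star a.
have c32 := @unit_sum_of_corner_split _ star inv a.
have c21 := @power_of_unit_sum _ star inv a.
by tfae=> h; [apply/c32/c43/c14 | apply/c43/c14/c21 | apply/c14/c21/c32 | apply/c21/c32/c43].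
Qed.
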